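(* There exist constants $c>0$ and $N_0$ such that for every $N\ge N_0$ that is a power of two there exists an interval graph $G=(V,E)$ with $|V|=N$ nodes satisfying the following. When the nodes are labeled $v_0,\dots,v_{N-1}$ in increasing order of the left endpoints of their intervals, the minimal $\pi$-OBDD representing $\chi_E$ has at least $c\,N\log N$ nodes, where $\pi$ is the $2$-interleaved variable order with decreasing significance.
   Context: An interval graph on $N$ nodes is given by intervals $[a_i,b_i]$ with $a_i<b_i$, $0\le i\le N-1$; two distinct nodes are adjacent iff their intervals intersect. Without loss of generality all $2N$ endpoints are distinct, so the left endpoints determine a unique labeling $v_0,\dots,v_{N-1}$ with $a_0<a_1<\dots<a_{N-1}$. Let $n=\lceil\log_2 N\rceil$. For $x=(x_0,\dots,x_{n-1})\in\{0,1\}^n$ put $|x|=\sum_{i=0}^{n-1}x_i2^i$. The characteristic function $\chi_E:\{0,1\}^{2n}\to\{0,1\}$ is defined by $\chi_E(x,y)=1$ iff $|x|,|y|<N$ and $\{v_{|x|},v_{|y|}\}\in E$. A $\pi$-OBDD for a variable order $\pi$ (a linear order of the input variables) is a directed acyclic rooted graph with two sinks labeled $0$ and $1$. Every inner node is labeled by a variable and has two outgoing edges labeled $0$ and $1$, and along every edge the variables respect $\pi$. An assignment determines a path from the root by following, at each node labeled $x_i$, the edge labeled by the value of $x_i$. The OBDD represents $f$ if this path always ends in the sink labeled $f(\text{assignment})$. The size of an OBDD is its number of nodes. The $2$-interleaved variable order with decreasing significance on $x,y\in\{0,1\}^n$ is $(x_{n-1},y_{n-1},x_{n-2},y_{n-2},\dots,x_0,y_0)$.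 *)

From HB Require Import structures.
From mathcomp Require Import all_boot all_order all_algebra.
Set Implicit Arguments. Unset Strict Implicit. Unset Printing Implicit Defensive.

(* An interval graph on N nodes: node i has interval [a i, b i] (only i < N
   matters).  Endpoints are natural numbers (only their relative order
   matters, so this is no loss of generality). *)
Definition interval_rep (N : nat) (a b : nat -> nat) : Prop :=
  [/\ (forall i j, i < j -> j < N -> a i < a j),
      (forall i, i < N -> a i < b i),
      (forall i j, i < N -> j < N -> a i != b j) &
      (forall i j, i < N -> j < N -> i != j -> b i != b j)].

Definition iadj (a b : nat -> nat) (i j : nat) : bool :=
  [&& i != j, a i <= b j & a j <= b i].

(* input variables x_0..x_{n-1} (inl) and y_0..y_{n-1} (inr) *)
Definition var (n : nat) := ('I_n + 'I_n)%type.

Definition bval (n : nat) (x : 'I_n -> bool) : nat :=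
  \sum_(i < n) (x i : nat) * 2 ^ i.

Definition chiE (N n : nat) (a b : nat -> nat) (asg : var n -> bool) : bool :=
  let X := bval (fun i => asg (inl i)) in
  let Y := bval (fun i => asg (inr i)) in
  [&& X < N, Y < N & iadj a b X Y].

Inductive onode (n s : nat) :=
| Sink of bool
| Inner of var n & 'I_s & 'I_s. (* label, 0-successor, 1-successor *)

Record obdd (n : nat) := Obdd {
  osize : nat;
  okind : 'I_osize -> onode n osize;
  oroot : 'I_osize }.
Arguments osize {n} _.
Arguments okind {n} _ _.
Arguments oroot {n} _.
Arguments Sink {n s} c.
Arguments Inner {n s} v lo hi.

(* A variable order pi is given by its rank function (position in pi). *)

Definition is_pi_obdd (n : nat) (rk : var n -> nat) (B : obdd n) : Prop :=
  [/\ (forall u v lo hi, okind B u = Inner v lo hi ->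
         forall w, (w = lo \/ w = hi) ->
         forall v' lo' hi', okind B w = Inner v' lo' hi' -> rk v < rk v'),
      (exists u0, okind B u0 = Sink false),
      (exists u1, okind B u1 = Sink true) &
      (forall u w c d, okind B u = Sink c ->
                       okind B w = Sink d -> c = d -> u = w)].

Fixpoint oeval (n : nat) (B : obdd n) (asg : var n -> bool) (fuel : nat)
  (u : 'I_(osize B)) : option bool :=
  match fuel with
  | 0 => None
  | k.+1 => match okind B u with
            | Sink c => Some c
            | Inner v lo hi => @oeval n B asg k (if asg v then hi else lo)
            end
  end.

(* B represents f: the path from the root ends in the sink labelled f(asg).
   The path is acyclic, so it has at most (osize B) nodes. *)
Definition represents (n : nat) (B : obdd n) (f : (var n -> bool) -> bool) :=
  forall asg, @oeval n B asg (osize B) (oroot B) = Some (f asg).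

(* 2-interleaved order with decreasing significance:
   x_{n-1}, y_{n-1}, x_{n-2}, y_{n-2}, ..., x_0, y_0 *)
Definition interleaved_rank (n : nat) (v : var n) : nat :=
  match v with
  | inl i => (n.-1 - i).*2
  | inr i => (n.-1 - i).*2.+1
  end.

From HB Require Import structures.
From mathcomp Require Import all_boot all_order all_algebra.
From mathcomp Require Import zify lra.
Set Implicit Arguments. Unset Strict Implicit. Unset Printing Implicit Defensive.

(* Cut the variable order after its first [l] variables.  All assignments that
   share a "low part" (their values on these variables) leave the top of the
   OBDD through a common cut node; low parts separated by some completion have
   distinct cut nodes, and if the function still depends on the next variable
   these cut nodes test that variable.  Hence fooling sets at distinct levels
   count disjoint sets of nodes ([fooling_bound]).

   The graph is given by a reach function: node X is adjacent to the nodes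
   X < Y <= reach X ([ReachGraph]).  Its reach is designed so that at each of
   the about n/4 levels between digit n/4 and digit (n-1)/2 there is a fooling
   set of size at least N/16 ([Fooling]): left nodes ending in an even number
   compare a threshold, left nodes ending in an odd number query a digit of
   their prefix.  Summing over these levels gives the bound ([hard_obdd_size]),
   from which the theorem follows for N >= 2^24. *)

(* Assignments that agree with [al] below rank [l] and with [ga] from rank [l]
   on; the low part [al] is read first by any OBDD respecting [rk]. *)
Definition splice (n : nat) (rk : var n -> nat) (l : nat) (al ga : var n -> bool)
    : var n -> bool :=
  fun v => if rk v < l then al v else ga v.

Lemma sum_indicator_inj (T : eqType) (E : nat) (lev : nat -> T) (x : T) :
  {in gtn E &, injective lev} -> \sum_(e < E) (x == lev e : nat) <= 1.
Proof.
move=> lev_inj.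
case: (pickP [pred e : 'I_E | x == lev e]) => [e0 /= /eqP x_e0|none]; last first.
  by rewrite big1 // => e _; move: (none e) => /= ->.
rewrite (bigD1 e0) //= x_e0 eqxx big1 ?addn0 // => e e_e0; apply/eqP; rewrite eqb0.
apply: contra e_e0 => /eqP /(lev_inj _ _ (ltn_ord e0) (ltn_ord e)) e0_e.
by apply/eqP/val_inj.
Qed.

Section ObddCut.
Variables (n : nat) (rk : var n -> nat) (B : obdd n).
Hypothesis B_ordered : is_pi_obdd rk B.
Local Notation ev := (@oeval n B).
Local Notation node := 'I_(osize B).

(* [below t u]: [u] is a sink or tests a variable of rank at least [t]; by the
   order condition every path leaving [u] then reads only ranks >= t. *)
Definition below (t : nat) (u : node) : bool :=
  match okind B u with Sink _ => true | Inner v _ _ => t <= rk v end.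

Lemma below_le t t' u : t' <= t -> below t u -> below t' u.
Proof. by rewrite /below; case: (okind B u) => // v _ _; apply: leq_trans. Qed.

Lemma below_succ u v lo hi (b : bool) :
  okind B u = Inner v lo hi -> below (rk v).+1 (if b then hi else lo).
Proof.
move=> u_v; rewrite /below; case w_kind: okind => [//|v' lo' hi'].
have [ordered _ _ _] := B_ordered; apply: (ordered u v lo hi u_v) w_kind.
by case: b; [right|left].
Qed.

Lemma oeval_mono a F F' u c : F <= F' -> ev a F u = Some c -> ev a F' u = Some c.
Proof.
elim: F F' u => [|F IH] [|F'] u //= le_F.
by case: (okind B u) => // v lo hi; apply: IH.
Qed.

Lemma oeval_ignore t a1 a2 F u :
  (forall v, t <= rk v -> a1 v = a2 v) -> below t u -> ev a1 F u = ev a2 F u.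
Proof.
move=> a12; elim: F u => [|F IH] u //= u_below.
case u_kind: (okind B u) => [//|v lo hi].
have t_v : t <= rk v by move: u_below; rewrite /below u_kind.
rewrite a12 //; apply: IH; apply: below_le (below_succ (a2 v) u_kind).
exact: leq_trans t_v _.
Qed.

Lemma oeval_agree t a1 a2 u F1 F2 c1 c2 :
  (forall v, t <= rk v -> a1 v = a2 v) -> below t u ->
  ev a1 F1 u = Some c1 -> ev a2 F2 u = Some c2 -> c1 = c2.
Proof.
move=> a12 u_below /(oeval_mono (leq_maxl F1 F2)) ev1.
move=> /(oeval_mono (leq_maxr F1 F2)).
by rewrite -(oeval_ignore (maxn F1 F2) a12 u_below) ev1 => -[].
Qed.

Fixpoint descend (l : nat) (a : var n -> bool) (k : nat) (u : node) : node :=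
  if k is k'.+1 then
    if okind B u is Inner v lo hi then
      if rk v < l then descend l a k' (if a v then hi else lo) else u
    else u
  else u.

Lemma descend_low l a1 a2 k u :
  (forall v, rk v < l -> a1 v = a2 v) -> descend l a1 k u = descend l a2 k u.
Proof.
move=> a12; elim: k u => [|k IH] u //=.
by case: (okind B u) => // v lo hi; case: ifP => // v_l; rewrite a12 // IH.
Qed.

Lemma descend_eval l a k u F c :
  ev a F u = Some c -> exists F', ev a F' (descend l a k u) = Some c.
Proof.
elim: k u F => [|k IH] u [|F] //=; try by exists F.+1.
case u_kind: (okind B u) => [c'|v lo hi] evF; first by exists F.+1; rewrite /= u_kind.
by case: ifP => _; [apply: IH evF | exists F.+1; rewrite /= u_kind].
Qed.

Lemma descend_below l a k u t : below t u -> below (minn l (t + k)) (descend l a k u).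
Proof.
elim: k u t => [|k IH] u t /=.
  by rewrite addn0 => /(below_le (geq_minr l t)).
case u_kind: (okind B u) => [c|v lo hi] u_below; first by rewrite /below u_kind.
have t_v : t <= rk v by move: u_below; rewrite /below u_kind.
case: ifP => v_l.
  by rewrite -addSnnS; apply/IH/(below_le _ (below_succ (a v) u_kind)).
by rewrite /below u_kind; apply: leq_trans (geq_minl _ _) _; rewrite leqNgt v_l.
Qed.

Variable f : (var n -> bool) -> bool.
Hypothesis B_rep : represents B f.

(* The cut node of a low part [al] at level [l]: where every assignment with
   low part [al] leaves the ranks < l. *)
Definition cut (l : nat) (al : var n -> bool) : node := descend l al l (oroot B).

Lemma cut_below l al : below l (cut l al).
Proof.
have := @descend_below l al l (oroot B) 0; rewrite add0n minnn; apply.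
by rewrite /below; case: okind.
Qed.

Lemma cut_eval l al ga :
  exists F, ev (splice rk l al ga) F (cut l al) = Some (f (splice rk l al ga)).
Proof.
have [F evF] := descend_eval l l (B_rep (splice rk l al ga)).
by exists F; rewrite /cut (descend_low _ (a2 := splice rk l al ga)) // => v v_l; rewrite /splice v_l.
Qed.

Lemma cut_separates l a1 a2 ga :
  f (splice rk l a1 ga) != f (splice rk l a2 ga) -> cut l a1 != cut l a2.
Proof.
apply: contraNneq => cut12; apply/eqP.
have [F1 ev1] := cut_eval l a1 ga; have [F2 ev2] := cut_eval l a2 ga.
rewrite cut12 in ev1; apply: (oeval_agree _ (cut_below l a2) ev1 ev2).
by move=> v l_v; rewrite /splice ltnNge l_v.
Qed.

Definition label_rank (u : node) : option nat :=
  if okind B u is Inner v _ _ then Some (rk v) else None.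

Lemma cut_label l al ga ga' :
  (forall v, rk v != l -> ga v = ga' v) ->
  f (splice rk l al ga) != f (splice rk l al ga') -> label_rank (cut l al) = Some l.
Proof.
move=> ga_ga' f_ne.
suff : ~~ below l.+1 (cut l al).
  move: (cut_below l al); rewrite /label_rank /below; case: okind => // v _ _.
  by rewrite -ltnNge ltnS => l_v v_l; congr Some; apply/eqP; rewrite eqn_leq v_l l_v.
apply: contra f_ne => below_l1; apply/eqP.
have [F1 ev1] := cut_eval l al ga; have [F2 ev2] := cut_eval l al ga'.
apply: (oeval_agree _ below_l1 ev1 ev2) => v l_v; rewrite /splice; case: ifP => // _.
by apply: ga_ga'; rewrite neq_ltn l_v orbT.
Qed.

(* Their cut
   nodes are then pairwise distinct nodes testing rank [lev e], so B has at
   least [\sum_e K e] nodes. *)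
Lemma fooling_bound (E : nat) (lev K : nat -> nat) (g : nat -> nat -> var n -> bool) :
  {in gtn E &, injective lev} ->
  (forall e i1 i2, e < E -> i1 < K e -> i2 < K e -> i1 != i2 ->
     exists ga, f (splice rk (lev e) (g e i1) ga) != f (splice rk (lev e) (g e i2) ga)) ->
  (forall e i, e < E -> i < K e ->
     exists ga ga', (forall v, rk v != lev e -> ga v = ga' v) /\
        f (splice rk (lev e) (g e i) ga) != f (splice rk (lev e) (g e i) ga')) ->
  \sum_(e < E) K e <= osize B.
Proof.
move=> lev_inj fooling depends.
pose level e := [set u : node | label_rank u == Some (lev e)].
have K_level e : e < E -> K e <= #|level e|.
  move=> lt_eE; pose h (i : 'I_(K e)) := cut (lev e) (g e i).
  have h_inj : injective h.
    move=> i1 i2 h12; apply/eqP; apply: contraLR isT => i12.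
    have [ga sep] := fooling e i1 i2 lt_eE (ltn_ord i1) (ltn_ord i2) i12.
    by move: (cut_separates sep); rewrite -/(h i1) -/(h i2) h12 eqxx.
  rewrite -[K e]card_ord -(card_imset _ h_inj); apply/subset_leq_card/subsetP.
  move=> _ /imsetP [i _ ->]; have [ga [ga' [ga_ga' f_ne]]] := depends e i lt_eE (ltn_ord i).
  by rewrite inE (cut_label ga_ga' f_ne).
apply: (@leq_trans (\sum_(e < E) #|level e|)); first by apply: leq_sum => e _; apply: K_level.
apply: (@leq_trans (\sum_(u : node) 1)); last by rewrite sum1_card card_ord.
under eq_bigr => e _ do rewrite -sum1_card big_mkcond /=.
have lev_inj' : {in gtn E &, injective (fun e => Some (lev e))}.
  by move=> e1 e2 ? ? [] /lev_inj; apply.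
rewrite exchange_big /=; apply: leq_sum => u _.
apply: leq_trans (sum_indicator_inj (label_rank u) lev_inj').
by apply/eq_leq/eq_bigr => e _; rewrite inE.
Qed.

End ObddCut.

Definition bit (X i : nat) : bool := odd (X %/ 2 ^ i).

Definition pair_asg (n X Y : nat) : var n -> bool :=
  fun v => match v with inl i => bit X i | inr i => bit Y i end.
Arguments pair_asg : clear implicits.

Lemma bval_bits n X : bval (fun i : 'I_n => bit X i) = X %% 2 ^ n.
Proof.
rewrite /bval; elim: n => [|n IH]; first by rewrite big_ord0 modn1.
rewrite big_ord_recr /= IH /bit; set q := X %/ 2 ^ n.
have X_split : X = q./2 * 2 ^ n.+1 + (odd q * 2 ^ n + X %% 2 ^ n).
  rewrite {1}(divn_eq X (2 ^ n)) -/q {1}(esym (odd_double_half q)) expnS -mul2n; lia.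
have low_lt : odd q * 2 ^ n + X %% 2 ^ n < 2 ^ n.+1.
  by have := ltn_pmod X (expn_gt0 2 n); rewrite expnS; case: (odd q); lia.
by rewrite [in RHS]X_split modnMDl (modn_small low_lt) addnC.
Qed.

Lemma bit_lo j P x i : x < 2 ^ j -> i < j -> bit (P * 2 ^ j + x) i = bit x i.
Proof.
move=> x_lt i_j; rewrite /bit -(subnK (ltnW i_j)) expnD mulnA divnMDl ?expn_gt0 //.
by rewrite oddD oddM oddX subn_eq0 leqNgt i_j andbF.
Qed.

Lemma bit_hi j P x i : x < 2 ^ j -> j <= i -> bit (P * 2 ^ j + x) i = bit (P * 2 ^ j) i.
Proof.
move=> x_lt j_i; rewrite /bit -(subnK j_i) expnD [2 ^ (i - j) * _]mulnC !divnMA.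
by rewrite divnMDl ?expn_gt0 // (divn_small x_lt) addn0 mulnK ?expn_gt0.
Qed.

Lemma bit_pow j i : bit (2 ^ j) i = (i == j).
Proof.
rewrite /bit; case: (ltngtP i j) => [i_j|j_i|->]; last by rewrite divnn expn_gt0.
  by rewrite -(subnK (ltnW i_j)) expnD mulnK ?expn_gt0 // oddX subn_eq0 leqNgt i_j.
by rewrite divn_small // ltn_exp2l.
Qed.

Lemma bits_inj n X X' : X < 2 ^ n -> X' < 2 ^ n ->
  (forall k, k < n -> bit X k = bit X' k) -> X = X'.
Proof.
elim: n X X' => [|n IH] X X'; first by rewrite expn0; case: X; case: X'.
move=> X_lt X'_lt same_bits; have := same_bits 0 isT; rewrite /bit expn0 !divn1 => odd_eq.
have half_eq : X./2 = X'./2.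
  apply: IH; rewrite -?divn2 ?ltn_divLR // -?expnSr //.
  by move=> k k_n; rewrite /bit -!divnMA -expnS; apply: same_bits.
by rewrite -(odd_double_half X) -(odd_double_half X') odd_eq half_eq.
Qed.

Lemma chiE_pair N n a b X Y : X < 2 ^ n -> Y < 2 ^ n ->
  chiE N a b (pair_asg n X Y) = [&& X < N, Y < N & iadj a b X Y].
Proof. by move=> X_lt Y_lt; rewrite /chiE /= !bval_bits !modn_small. Qed.

Lemma chiE_ext N n a b (a1 a2 : var n -> bool) : a1 =1 a2 -> chiE N a b a1 = chiE N a b a2.
Proof.
move=> a12; have bval_eq (s : 'I_n -> var n) : bval (a1 \o s) = bval (a2 \o s).
  by apply: eq_bigr => i _; rewrite /= a12.
by rewrite /chiE (bval_eq inl) (bval_eq inr).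
Qed.

Lemma splice_pair n j P Q x y : j <= n -> x < 2 ^ j -> y < 2 ^ j ->
  splice (@interleaved_rank n) (n - j).*2 (pair_asg n (P * 2 ^ j) (Q * 2 ^ j))
    (pair_asg n x y) =1 pair_asg n (P * 2 ^ j + x) (Q * 2 ^ j + y).
Proof.
move=> j_n x_lt y_lt [] i; rewrite /splice /pair_asg /interleaved_rank;
  [rewrite ltn_double | rewrite ltn_Sdouble]; have i_n := ltn_ord i;
  (case: ifP => high; [rewrite bit_hi //; move: high; lia
                      | rewrite bit_lo //; move/negbT: high; lia]).
Qed.

(* Interval graphs from a reach function: node [i] gets the interval
   [i C, r(i) C + i + 1] with C = N + 1, so for X < Y the nodes X and Y are
   adjacent iff Y <= r(X); the offsets [i + 1] make all endpoints distinct. *)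
Section ReachGraph.
Variables (N : nat) (r : nat -> nat).
Hypothesis r_ge : forall i, i <= r i.

Definition left_end (i : nat) : nat := i * N.+1.
Definition right_end (i : nat) : nat := r i * N.+1 + i.+1.

Lemma reach_interval_rep : interval_rep N left_end right_end.
Proof.
rewrite /left_end /right_end; split.
- by move=> i j i_j _; rewrite ltn_mul2r i_j.
- move=> i _; apply: (@leq_ltn_trans (r i * N.+1)); last by rewrite -addn1 leq_add2l.
  by rewrite leq_mul2r r_ge orbT.
- move=> i j _ j_N; apply/eqP => /(congr1 (modn^~ N.+1)).
  by rewrite modnMl modnMDl modn_small.
- move=> i j i_N j_N; apply: contra_neq => /(congr1 (modn^~ N.+1)).
  by rewrite !modnMDl !modn_small // => -[].
Qed.

Lemma reach_adj X Y : X < Y -> Y < N -> iadj left_end right_end X Y = (Y <= r X).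
Proof.
move=> X_Y Y_N; rewrite /iadj /left_end /right_end (ltn_eqF X_Y) /=.
have -> : X * N.+1 <= r Y * N.+1 + Y.+1.
  by apply: leq_trans (leq_addr _ _); rewrite leq_mul2r (leq_trans (ltnW X_Y)) ?orbT.
apply/idP/idP => [Y_le|Y_le]; last first.
  by rewrite (leq_trans _ (leq_addr _ _)) // leq_mul2r Y_le orbT.
rewrite leqNgt; apply/negP => rX_Y.
have : (r X).+1 * N.+1 <= Y * N.+1 by rewrite leq_mul2r rX_Y orbT.
rewrite mulSn; move: Y_le; set rXC := r X * _; set YC := Y * _; lia.
Qed.

End ReachGraph.

(* The hard interval graph on the nodes [0, 2^n).  With q = n/4 and h = (n-1)/2,
   an odd node X "queries" the digit of X >> q at the position written in
   digits 1..q-1 of X; X is active if it is even or this digit is 1.  An active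
   node X of the left half reaches, in the right half, the h-aligned window
   [2^(n-1) + (X mod 2^h) 2^h, 2^(n-1) + (X mod 2^h + 1) 2^h). *)
Definition query_width (n : nat) : nat := n %/ 4.
Definition half_width (n : nat) : nat := n.-1 %/ 2.

Definition active (n X : nat) : bool :=
  ~~ odd X || bit (X %/ 2 ^ query_width n) ((X %% 2 ^ query_width n) %/ 2).

Definition reach (n X : nat) : nat :=
  if (X < 2 ^ n.-1) && active n X
  then 2 ^ n.-1 + (X %% 2 ^ half_width n).+1 * 2 ^ half_width n - 1
  else X.

Lemma reach_ge n X : X <= reach n X.
Proof.
rewrite /reach; case: ifP => // /andP [X_lt _].
have : 0 < (X %% 2 ^ half_width n).+1 * 2 ^ half_width n by rewrite muln_gt0 expn_gt0.
by move: X_lt; set w := _ * _; lia.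
Qed.

Lemma window_cmp T A t x y L : y < L ->
  (T + (A + t) * L + y <= T + (A + x).+1 * L - 1) = (t <= x).
Proof.
move=> y_L; rewrite !mulnDl mulSn; set AL := A * L.
case: (leqP t x) => t_x.
  have : t * L <= x * L by rewrite leq_mul2r t_x orbT.
  by set tL := t * L; set xL := x * L; lia.
have : x * L + L <= t * L by rewrite addnC -mulSn leq_mul2r t_x orbT.
by set tL := t * L; set xL := x * L; lia.
Qed.

(* Level [j] of the hard graph: left nodes [P 2^j + x] whose window offset is
   the low part of the prefix [P], and right nodes [partner P t 2^j + y] lying
   in that window at threshold [t]. *)
Section Level.
Variables n j : nat.
Hypotheses (j_ge3 : 3 <= j) (j_le_h : j <= half_width n).
Local Notation h := (half_width n).

Lemma half_widths : h + h <= n.-1.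
Proof. by rewrite /half_width; lia. Qed.

Lemma j_lt_n : j < n.
Proof. by move: half_widths j_le_h j_ge3; rewrite /half_width; lia. Qed.

Lemma pow_prefix : 2 ^ n.-1 = 2 ^ (n.-1 - j) * 2 ^ j.
Proof. by rewrite -expnD subnK //; move: half_widths j_le_h; lia. Qed.

Lemma pow_window : 2 ^ h = 2 ^ (h - j) * 2 ^ j.
Proof. by rewrite -expnD subnK. Qed.

Definition window_offset (P : nat) : nat := P %% 2 ^ (h - j).
Definition partner (P t : nat) : nat :=
  2 ^ (n.-1 - j) + (window_offset P * 2 ^ j + t) * 2 ^ (h - j).

Lemma partner_shift P t :
  partner P t * 2 ^ j = 2 ^ n.-1 + (window_offset P * 2 ^ j + t) * 2 ^ h.
Proof. by rewrite /partner mulnDl -mulnA -pow_window -pow_prefix. Qed.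

Lemma offset_lt P z : z < 2 ^ j -> window_offset P * 2 ^ j + z < 2 ^ h.
Proof.
move=> z_lt; have off_lt : window_offset P < 2 ^ (h - j) by rewrite ltn_pmod ?expn_gt0.
rewrite pow_window; apply: (@leq_trans ((window_offset P).+1 * 2 ^ j)).
  by rewrite mulSn; lia.
by rewrite leq_mul2r off_lt orbT.
Qed.

Lemma left_node_lt P x : P < 2 ^ (n.-1 - j) -> x < 2 ^ j -> P * 2 ^ j + x < 2 ^ n.-1.
Proof.
move=> P_lt x_lt; rewrite pow_prefix; apply: (@leq_trans (P.+1 * 2 ^ j)).
  by rewrite mulSn; lia.
by rewrite leq_mul2r P_lt orbT.
Qed.

Lemma pow_halves : 2 ^ n = 2 ^ n.-1 + 2 ^ n.-1.
Proof. by rewrite addnn -mul2n -expnS prednK // (leq_ltn_trans _ j_lt_n). Qed.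

Lemma partner_node_lt P t y :
  t < 2 ^ j -> y < 2 ^ j -> 2 ^ n.-1 <= partner P t * 2 ^ j + y < 2 ^ n.
Proof.
move=> t_lt y_lt; rewrite partner_shift pow_halves -addnA leq_addr ltn_add2l /=.
have j_h : 2 ^ j <= 2 ^ h by rewrite leq_exp2l.
apply: (@leq_trans ((window_offset P * 2 ^ j + t).+1 * 2 ^ h)).
  by rewrite mulSn; lia.
apply: (@leq_trans (2 ^ h * 2 ^ h)); first by rewrite leq_mul2r offset_lt ?orbT.
by rewrite -expnD leq_exp2l // half_widths.
Qed.

Lemma level_adj P x y t : P < 2 ^ (n.-1 - j) -> x < 2 ^ j -> y < 2 ^ j -> t < 2 ^ j ->
  iadj (left_end (2 ^ n)) (right_end (2 ^ n) (reach n)) (P * 2 ^ j + x) (partner P t * 2 ^ j + y)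
  = active n (P * 2 ^ j + x) && (t <= x).
Proof.
move=> P_lt x_lt y_lt t_lt; have X_lt := left_node_lt P_lt x_lt.
have /andP [Y_ge Y_lt] := partner_node_lt P t_lt y_lt.
rewrite (reach_adj (reach_ge n)) //; last exact: leq_trans X_lt Y_ge.
rewrite /reach X_lt /=; case: (active n _) => /=; last first.
  by apply/negbTE; rewrite -ltnNge; apply: leq_trans X_lt Y_ge.
have -> : (P * 2 ^ j + x) %% 2 ^ h = window_offset P * 2 ^ j + x.
  rewrite {1}(divn_eq P (2 ^ (h - j))) mulnDl -mulnA -pow_window -addnA modnMDl.
  by rewrite modn_small // offset_lt.
have y_h : y < 2 ^ h by apply: leq_trans y_lt _; rewrite leq_exp2l.
by rewrite partner_shift window_cmp.
Qed.

End Level.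

(* A fooling set at the cut between digit [j] and digit [j - 1]: the low parts
   fix a prefix [P < 2^(n-1-j)] of the left node and a partner window with an
   even threshold [t] in [2, 2^(j-1)).  Completions with a left node ending in
   an even [x] compare thresholds; completions ending in an odd [x] query a
   digit of the prefix, which separates different prefixes. *)
Section Fooling.
Variables n j : nat.
Hypotheses (j_ge3 : 3 <= j) (j_le_h : j <= half_width n).
Hypotheses (q_lt_j : query_width n < j) (queries_fit : 2 * n <= 2 ^ query_width n).

Local Notation q := (query_width n).
Local Notation rk := (@interleaved_rank n).
Local Notation f := (chiE (2 ^ n) (left_end (2 ^ n)) (right_end (2 ^ n) (reach n))).
Let j_n : j < n := j_lt_n j_ge3 j_le_h.

Definition level : nat := (n - j).*2.
Definition thresholds : nat := 2 ^ (j - 2) - 1.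
Definition fooling_size : nat := 2 ^ (n.-1 - j) * thresholds.
Definition prefix_of (i : nat) : nat := i %/ thresholds.
Definition threshold_of (i : nat) : nat := 2 * (i %% thresholds) + 2.
Definition low_part (i : nat) : var n -> bool :=
  pair_asg n (prefix_of i * 2 ^ j) (partner n j (prefix_of i) (threshold_of i) * 2 ^ j).

Lemma pow_j : 2 ^ j = 2 * 2 ^ (j - 1).
Proof. by rewrite -expnS; congr (2 ^ _); lia. Qed.

Lemma thresholds_gt0 : 0 < thresholds.
Proof.
rewrite /thresholds; have : 2 ^ 1 <= 2 ^ (j - 2) by rewrite leq_exp2l //; lia.
by rewrite expn1; lia.
Qed.

Lemma threshold_lt i : threshold_of i < 2 ^ (j - 1).
Proof.
have -> : 2 ^ (j - 1) = 2 * 2 ^ (j - 2) by rewrite -expnS; congr (2 ^ _); lia.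
have := ltn_pmod i thresholds_gt0; rewrite /threshold_of /thresholds.
by have := expn_gt0 2 (j - 2); lia.
Qed.

Lemma prefix_lt i : i < fooling_size -> prefix_of i < 2 ^ (n.-1 - j).
Proof. by rewrite /prefix_of ltn_divLR ?thresholds_gt0. Qed.

Lemma low_part_value i x y : i < fooling_size -> x < 2 ^ j -> y < 2 ^ j ->
  f (splice rk level (low_part i) (pair_asg n x y))
  = active n (prefix_of i * 2 ^ j + x) && (threshold_of i <= x).
Proof.
move=> i_lt x_lt y_lt; have P_lt := prefix_lt i_lt.
have t_lt : threshold_of i < 2 ^ j.
  by apply: leq_trans (threshold_lt i) _; rewrite leq_exp2l //; lia.
have X_lt : prefix_of i * 2 ^ j + x < 2 ^ n.
  by rewrite (leq_trans (left_node_lt j_ge3 j_le_h P_lt x_lt)) // leq_exp2l ?leq_pred.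
have /andP [_ Y_lt] := partner_node_lt j_ge3 j_le_h (prefix_of i) t_lt y_lt.
rewrite (chiE_ext _ _ _ (splice_pair _ _ (ltnW j_n) x_lt y_lt)) chiE_pair // X_lt Y_lt /=.
exact: level_adj.
Qed.

Lemma even_active P x : ~~ odd x -> active n (P * 2 ^ j + x).
Proof.
move=> x_even; rewrite /active oddD oddM oddX /=.
have -> : (j == 0) = false by lia.
by rewrite andbF /= (negbTE x_even).
Qed.

(* Every low part leaves [f] depending on the digit [x_(j-1)], the variable
   of rank [level]: it decides whether [x] reaches the threshold. *)
Lemma level_depends i : i < fooling_size ->
  exists ga ga', (forall v, rk v != level -> ga v = ga' v) /\
    f (splice rk level (low_part i) ga) != f (splice rk level (low_part i) ga').
Proof.
move=> i_lt; exists (pair_asg n 0 0), (pair_asg n (2 ^ (j - 1)) 0); split.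
  move=> [] k //=; rewrite bit_pow /bit div0n => rank_ne; apply/esym/negbTE.
  by apply: contra rank_ne => /eqP ->; rewrite /level; lia.
have half_lt : 2 ^ (j - 1) < 2 ^ j by rewrite ltn_exp2l //; lia.
have half_even : ~~ odd (2 ^ (j - 1)) by rewrite oddX orbF -lt0n subn_gt0; lia.
rewrite !low_part_value ?expn_gt0 // !even_active // (ltnW (threshold_lt i)).
by rewrite /threshold_of addn2.
Qed.

(* Low parts with equal prefixes but thresholds [t1 < t2] are separated by
   the even left node ending in [t1]. *)
Lemma threshold_separates i1 i2 : i1 < fooling_size -> i2 < fooling_size ->
  prefix_of i1 = prefix_of i2 -> threshold_of i1 < threshold_of i2 ->
  exists ga, f (splice rk level (low_part i1) ga) != f (splice rk level (low_part i2) ga).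
Proof.
move=> i1_lt i2_lt same_prefix t12; exists (pair_asg n (threshold_of i1) 0).
have t1_lt : threshold_of i1 < 2 ^ j by have := threshold_lt i1; rewrite pow_j; lia.
rewrite !low_part_value ?expn_gt0 // same_prefix leqnn leqNgt t12 andbF andbT.
by rewrite even_active // /threshold_of oddD oddM.
Qed.

(* The number [(P 2^j + 2^(j-1)) >> q] whose digits the odd left nodes query. *)
Definition query_prefix (P : nat) : nat := P * 2 ^ (j - q) + 2 ^ (j.-1 - q).

Lemma query_prefix_shift P : query_prefix P * 2 ^ q = P * 2 ^ j + 2 ^ (j - 1).
Proof. by rewrite /query_prefix mulnDl -mulnA -!expnD !subnK ?subn1 //; lia. Qed.

Lemma query_prefix_inj : injective query_prefix.
Proof.
move=> P1 P2 /(congr1 (muln^~ (2 ^ q))) /=; rewrite !query_prefix_shift.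
by move=> /eqP; rewrite eqn_add2r eqn_pmul2r ?expn_gt0 // => /eqP.
Qed.

Lemma query_prefix_lt P : P < 2 ^ (n.-1 - j) -> query_prefix P < 2 ^ n.
Proof.
move=> P_lt; apply: leq_ltn_trans (leq_pmulr _ (expn_gt0 2 q)) _.
have half_lt : 2 ^ (j - 1) < 2 ^ j by rewrite ltn_exp2l //; lia.
rewrite query_prefix_shift (leq_trans (left_node_lt j_ge3 j_le_h P_lt half_lt)) //.
by rewrite leq_exp2l ?leq_pred.
Qed.

Lemma query_active P k : k < n ->
  active n (P * 2 ^ j + (2 ^ (j - 1) + (2 * k + 1))) = bit (query_prefix P) k.
Proof.
move=> k_n; have k_fits : 2 * k + 1 < 2 ^ q by lia.
rewrite addnA -query_prefix_shift /active divnMDl ?expn_gt0 // modnMDl.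
rewrite (divn_small k_fits) (modn_small k_fits) addn0.
have -> : (2 * k + 1) %/ 2 = k by lia.
have q_gt0 : 0 < q by move: queries_fit; case: (q); rewrite ?expn0; lia.
rewrite oddD oddM oddX /=; have -> : (q == 0) = false by lia.
by rewrite andbF /= addn1 /= oddM.
Qed.

(* Low parts with different prefixes are separated by an odd left node
   querying a digit where their query prefixes differ. *)
Lemma query_separates i1 i2 : i1 < fooling_size -> i2 < fooling_size ->
  prefix_of i1 != prefix_of i2 ->
  exists ga, f (splice rk level (low_part i1) ga) != f (splice rk level (low_part i2) ga).
Proof.
move=> i1_lt i2_lt prefix_ne.
have : ~~ [forall k : 'I_n, bit (query_prefix (prefix_of i1)) k
                              == bit (query_prefix (prefix_of i2)) k].
  apply: contra prefix_ne => /forallP same_bits; apply/eqP/query_prefix_inj.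
  apply: bits_inj (query_prefix_lt (prefix_lt i1_lt)) (query_prefix_lt (prefix_lt i2_lt)) _.
  by move=> k k_n; apply/eqP/(same_bits (Ordinal k_n)).
rewrite negb_forall => /existsP [k bit_ne]; have k_n := ltn_ord k.
exists (pair_asg n (2 ^ (j - 1) + (2 * k + 1)) 0).
have x_lt : 2 ^ (j - 1) + (2 * k + 1) < 2 ^ j.
  have : 2 ^ q <= 2 ^ (j - 1) by rewrite leq_exp2l //; lia.
  by rewrite pow_j; lia.
have t_le i : threshold_of i <= 2 ^ (j - 1) + (2 * k + 1).
  by have := threshold_lt i; lia.
by rewrite !low_part_value ?expn_gt0 // !t_le !andbT !query_active.
Qed.

Lemma level_fooling i1 i2 : i1 < fooling_size -> i2 < fooling_size -> i1 != i2 ->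
  exists ga, f (splice rk level (low_part i1) ga) != f (splice rk level (low_part i2) ga).
Proof.
move=> i1_lt i2_lt i12; have [prefix_eq|] := eqVneq (prefix_of i1) (prefix_of i2); last first.
  exact: query_separates.
have : threshold_of i1 != threshold_of i2.
  apply: contra i12 => /eqP t12; apply/eqP.
  rewrite (divn_eq i1 thresholds) (divn_eq i2 thresholds) -!/(prefix_of _) prefix_eq.
  by move: t12; rewrite /threshold_of; lia.
rewrite neq_ltn => /orP [t12|t21]; first exact: threshold_separates.
have [ga sep] := threshold_separates i2_lt i1_lt (esym prefix_eq) t21.
by exists ga; rewrite eq_sym.
Qed.

End Fooling.

Lemma linear_below_pow k : 6 <= k -> 8 * k + 6 <= 2 ^ k.
Proof.
elim: k => [|k IH] //; rewrite leq_eqVlt => /orP [/eqP <- //|k_ge].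
by have := IH k_ge; rewrite expnS; lia.
Qed.

Lemma fooling_size_large n j : 3 <= j -> j < n -> 2 ^ n <= 16 * fooling_size n j.
Proof.
move=> j_ge3 j_n; rewrite /fooling_size /thresholds.
have -> : 2 ^ n = 8 * (2 ^ (n.-1 - j) * 2 ^ (j - 2)).
  by rewrite -expnD -[8]/(2 ^ 3) -expnD; congr (2 ^ _); lia.
have : 2 * 2 ^ (n.-1 - j) <= 2 ^ (j - 2) * 2 ^ (n.-1 - j).
  by rewrite leq_mul2r -[2]/(2 ^ 1) leq_exp2l ?orbT //; lia.
rewrite mulnBr muln1 [2 ^ (j - 2) * _]mulnC.
by set P := 2 ^ (n.-1 - j); set PW := P * 2 ^ (j - 2); lia.
Qed.

(* For n >= 24 every digit position fits in the q - 1 address digits. *)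
Lemma queries_fit n : 24 <= n -> 2 * n <= 2 ^ query_width n.
Proof.
move=> n_ge; apply: leq_trans (linear_below_pow _); rewrite /query_width; lia.
Qed.

Lemma level_range n e : 24 <= n -> e < half_width n - query_width n ->
  [/\ 3 <= query_width n + 1 + e, query_width n + 1 + e <= half_width n
     & query_width n < query_width n + 1 + e].
Proof. by rewrite /half_width /query_width; split; lia. Qed.

Lemma hard_obdd_size n (B : obdd n) : 24 <= n ->
  is_pi_obdd (@interleaved_rank n) B ->
  represents B (chiE (2 ^ n) (left_end (2 ^ n)) (right_end (2 ^ n) (reach n))) ->
  n * 2 ^ n <= 128 * osize B.
Proof.
move=> n_ge B_ordered B_rep; set E := half_width n - query_width n.
pose j e := query_width n + 1 + e.
have fit := queries_fit n_ge.
have sum_le : \sum_(e < E) fooling_size n (j e) <= osize B.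
  apply: (fooling_bound B_ordered B_rep (lev := fun e => level n (j e))
           (K := fun e => fooling_size n (j e)) (g := fun e => @low_part n (j e))).
  - move=> e1 e2 e1_lt e2_lt /=; rewrite /level -!muln2.
    have [_ j1_h _] := level_range n_ge e1_lt; have [_ j2_h _] := level_range n_ge e2_lt.
    by move: j1_h j2_h; rewrite /j /half_width; lia.
  - by move=> e i1 i2 e_lt; have [? ? ?] := level_range n_ge e_lt; apply: level_fooling.
  - by move=> e i e_lt; have [? ? ?] := level_range n_ge e_lt; apply: level_depends.
have sum_ge : E * 2 ^ n <= 16 * \sum_(e < E) fooling_size n (j e).
  rewrite big_distrr /= -[E in E * _]card_ord -sum_nat_const; apply: leq_sum => e _.
  have [j_ge3 j_h _] := level_range n_ge (ltn_ord e).
  by apply: fooling_size_large; move: j_ge3 j_h; rewrite /j /half_width; lia.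
have n_le : n <= 8 * E by rewrite /E /half_width /query_width; lia.
apply: (@leq_trans (8 * (E * 2 ^ n))); first by rewrite mulnA leq_mul2r n_le orbT.
by rewrite -[128]/(8 * 16) -mulnA leq_mul2l (leq_trans sum_ge) // leq_mul2l sum_le orbT.
Qed.

Lemma up_log_pow k : 0 < k -> up_log 2 (2 ^ k) = k.
Proof. by case: k => // k _; apply: up_log_eq; rewrite // leqnn andbT ltn_exp2l. Qed.

Import GRing.Theory Num.Theory.
Local Open Scope ring_scope.

Theorem mainTheorem3 :
  exists (c : rat) (N0 : nat), 0 < c /\
    forall N : nat, (N0 <= N)%N -> (exists k, N = 2 ^ k)%N ->
      exists a b : nat -> nat,
        interval_rep N a b /\
        forall B : obdd (up_log 2 N),
          is_pi_obdd (@interleaved_rank (up_log 2 N)) B ->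
          represents B (chiE N a b) ->
          c * (N * up_log 2 N)%:R <= (osize B)%:R.
Proof.
exists (1 / 128), (2 ^ 24)%N; split; first by rewrite divr_gt0.
move=> N N_ge [n N_pow]; subst N.
have n_ge : (24 <= n)%N by rewrite -(@leq_exp2l 2).
rewrite up_log_pow; last by lia.
exists (left_end (2 ^ n)), (right_end (2 ^ n) (reach n)).
split=> [|B B_ordered B_rep]; first exact: reach_interval_rep (reach_ge n).
have : ((2 ^ n * n)%:R <= (128 * osize B)%:R :> rat).
  by rewrite ler_nat mulnC hard_obdd_size.
rewrite !natrM; lra.
Qed.
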